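(* Let $\Gamma$ be a connected quartic graph on $n\ge 11$ vertices whose algebraic connectivity $\mu=\mu(\Gamma)$ is minimum among all connected quartic graphs on $n$ vertices. Then: if $n\ge 11$, $\mu<0.355$; if $n\ge13$, $\mu<0.268$; if $n\ge18$, $\mu<0.129$; if $n\ge21$, $\mu<0.091$; if $n\ge 26$, $\mu<0.059$.
   Context: Quartic means 4-regular; graphs are finite and simple. The algebraic connectivity is the second smallest eigenvalue of the Laplacian $L=\Delta-A$. *)

From HB Require Import structures.
From mathcomp Require Import all_boot all_order all_algebra.
Set Implicit Arguments. Unset Strict Implicit. Unset Printing Implicit Defensive.
Import Order.TTheory GRing.Theory Num.Theory.
Local Open Scope ring_scope.

Definition simple_graph (n : nat) (e : rel 'I_n) : Prop :=
  irreflexive e /\ symmetric e.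

Definition degree (n : nat) (e : rel 'I_n) (i : 'I_n) : nat :=
  #|[set j | e i j]|.

Definition quartic (n : nat) (e : rel 'I_n) : Prop :=
  forall i : 'I_n, degree e i = 4%N.

Definition connected_graph (n : nat) (e : rel 'I_n) : Prop :=
  forall i j : 'I_n, connect e i j.

Definition connected_quartic (n : nat) (e : rel 'I_n) : Prop :=
  [/\ simple_graph e, quartic e & connected_graph e].

Definition laplacian (R : nzRingType) (n : nat) (e : rel 'I_n) : 'M[R]_n :=
  \matrix_(i, j) ((if i == j then (degree e i)%:R else 0) - (e i j)%:R).

(* s is the list of eigenvalues of A, with multiplicities, in
   nondecreasing order: the characteristic polynomial factors as
   prod_(x <- s) (X - x). *)
Definition sorted_spectrum (R : rcfType) (n : nat) (A : 'M[R]_n) (s : seq R)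
  : Prop :=
  [/\ size s = n, sorted <=%R s & char_poly A = \prod_(x <- s) ('X - x%:P)].

(* mu is the algebraic connectivity (second smallest Laplacian eigenvalue,
   counted with multiplicity) of the graph e. *)
Definition alg_conn (R : rcfType) (n : nat) (e : rel 'I_n) (mu : R) : Prop :=
  exists s : seq R, sorted_spectrum (laplacian R e) s /\ mu = nth 0 s 1.

From mathcomp Require Import all_boot all_order all_algebra.
From mathcomp Require Import spectral sesquilinear complex.
From mathcomp Require Import zify ssrZ ring.
From Stdlib Require BinNums.

(* The minimum [mu] is at most the algebraic connectivity of any single
   connected quartic graph on [n] vertices, and since its Laplacian [L]
   satisfies [L 1 = 0], that second eigenvalue is at most the Rayleigh
   quotient [x L x^T / x x^T] of any nonzero [x] orthogonal to [1]. It thus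
   suffices to exhibit, for every [n >= 11], a connected quartic graph and an
   integer test vector whose Rayleigh quotient is below the required bound.
   For [n <= 35] the graphs are explicit chains of small dense blocks; for
   [n >= 36] a fixed gadget sits at each end of the band [i ~ i +- 1, i +- 3],
   and an antisymmetric test vector supported on the two gadgets has a
   quotient independent of [n]. The cases [n < 50] are checked by computation,
   the others by a uniform argument. *)

Set Implicit Arguments.
Unset Strict Implicit.
Unset Printing Implicit Defensive.

Import Order.TTheory GRing.Theory Num.Theory.
Local Open Scope ring_scope.

Local Notation Z := BinNums.Z.

Lemma char_poly_similar (F : fieldType) n (P A : 'M[F]_n) : P \in unitmx ->
  char_poly (invmx P *m A *m P) = char_poly A.
Proof.
move=> Pu; rewrite /char_poly.
have -> : char_poly_mx (invmx P *m A *m P) =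
    map_mx polyC (invmx P) *m char_poly_mx A *m map_mx polyC P.
  rewrite /char_poly_mx mulmxBr mulmxBl -!map_mxM.
  by rewrite mul_mx_scalar -scalemxAl -map_mxM mulVmx // map_mx1 scalemx1.
rewrite !det_mulmx !det_map_mx /= mulrAC -rmorphM -det_mulmx.
by rewrite mulVmx // det1 rmorph1 mul1r.
Qed.

Lemma count_lt_second (d : Order.disp_t) (T : orderType d) (x0 : T) (s : seq T) :
  sorted <=%O s -> (count (fun y => y < nth x0 s 1)%O s <= 1)%N.
Proof.
case: s => [|a [|b t]] //=; first by rewrite addn0 leq_b1.
case/andP=> _ pt; rewrite ltxx add0n.
have /allP tb := order_path_min le_trans pt.
rewrite (eq_in_count (a2 := pred0)) ?count_pred0 ?addn0 ?leq_b1 //.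
by move=> y /tb /= ?; rewrite ltNge; apply/negbF.
Qed.

Lemma count_map_enum_gt1 (T : finType) (U : Type) (F : T -> U) (p : pred U) k k' :
  k != k' -> p (F k) -> p (F k') -> (1 < count p [seq F i | i <- enum T])%N.
Proof.
move=> kk' pk pk'; rewrite count_map -size_filter.
have := @uniq_leq_size _ [:: k; k'] (filter (preim F p) (enum T)).
rewrite /= inE kk' => /(_ isT); apply.
by move=> z; rewrite !inE mem_filter mem_enum andbT => /orP[] /eqP ->.
Qed.

(* In an orthonormal eigenbasis, [z] holds the coordinates of the all-ones
   vector: they vanish on every eigenvalue [>= m > 0], so [z] is supported on
   the single eigenvalue below [m], and [y] orthogonal to [z] has no component
   there. *)
Lemma diag_form_ge (C : numClosedFieldType) n (m : C) (d y z : 'I_n -> C) :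
  0 < m -> (forall k, d k \is Num.real) ->
  (forall k k', d k < m -> d k' < m -> k = k') ->
  (forall k, z k * d k = 0) -> (exists k, z k != 0) ->
  \sum_k y k * (z k)^* = 0 ->
  m * \sum_k y k * (y k)^* <= \sum_k y k * d k * (y k)^*.
Proof.
move=> m_gt0 d_real below_uniq zd0 [k0 zk0] yz0.
have m_real : m \is Num.real by rewrite realE ltW.
suff y0_or_ge k : y k = 0 \/ m <= d k.
  rewrite mulr_sumr; apply: ler_sum => k _.
  case: (y0_or_ge k) => [->|mdk]; first by rewrite !mul0r mulr0.
  by rewrite mulrC [leRHS]mulrAC ler_wpM2l ?mul_conjC_ge0.
case: (boolP (m <= d k)) => [|dkm]; [by right | left].
rewrite -real_ltNge // in dkm.
have z_other k' : k' != k -> z k' = 0.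
  move=> k'k; have mdk' : m <= d k'.
    by rewrite real_leNgt //; apply/negP => /below_uniq /(_ dkm) /eqP; rewrite (negbTE k'k).
  have : d k' != 0 by rewrite gt_eqF // (lt_le_trans m_gt0).
  by have := zd0 k'; move/eqP; rewrite mulf_eq0 => /orP[/eqP //|->].
have zk : z k != 0.
  by case: (eqVneq k0 k) zk0 => [<- //|/z_other ->]; rewrite eqxx.
have : y k * (z k)^* = 0.
  rewrite -yz0 (bigD1 k) //= big1 ?addr0 // => k' /z_other ->.
  by rewrite conjC0 mulr0.
by move/eqP; rewrite mulf_eq0 conjC_eq0 (negbTE zk) orbF => /eqP.
Qed.

Section SymmetricSpectrum.
Variable R : rcfType.
Local Notation C := (complex R).
Local Notation toC := (real_complex R).
Variables (n : nat) (L : 'M[R]_n).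
Hypothesis L_sym : L^T = L.

Let A : 'M[C]_n := map_mx toC L.
Let P := spectralmx A.
Let d := spectral_diag A.

Lemma hermsym_complexified : A \is hermsymmx.
Proof.
apply: realsym_hermsym.
  apply/is_hermitianmxP; rewrite expr0 scale1r map_mx_id // /A.
  by rewrite map_trmx L_sym.
by apply/mxOverP => i j; rewrite mxE; apply/complex_realP; eexists.
Qed.

Lemma complexified_spectral : A = invmx P *m diag_mx d *m P.
Proof. exact/orthomx_spectralP/hermitian_normalmx/hermsym_complexified. Qed.

Lemma spectral_diag_real k : d 0 k = toC (complex.Re (d 0 k)).
Proof.
have /mxOverP /(_ 0 k) := hermitian_spectral_diag_real hermsym_complexified.
by move=> /RRe_real.
Qed.

Lemma char_poly_complexified : char_poly A = \prod_(i < n) ('X - (d 0 i)%:P).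
Proof.
rewrite complexified_spectral char_poly_similar ?spectral_unit //.
rewrite char_poly_trig ?diag_mx_is_trig //.
by apply: eq_bigr => i _; rewrite mxE eqxx mulr1n.
Qed.

Lemma sorted_spectrum_exists : exists s, sorted_spectrum L s.
Proof.
exists (sort <=%R [seq complex.Re (d 0 i) | i <- enum 'I_n]); split.
- by rewrite size_sort size_map size_enum_ord.
- exact/sort_sorted/le_total.
apply: (map_poly_inj toC); rewrite map_char_poly -/A char_poly_complexified.
rewrite map_prod_XsubC (perm_big _ (permEl (perm_sort _ _))) big_map big_enum /=.
by apply: eq_bigr => i _; rewrite -spectral_diag_real.
Qed.

Lemma sorted_spectrum_perm s : sorted_spectrum L s ->
  perm_eq (map toC s) [seq d 0 i | i <- enum 'I_n].
Proof.
case=> _ _ cpL.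
have eq_prod : \prod_(y <- map toC s) ('X - y%:P) =
    \prod_(y <- [seq d 0 i | i <- enum 'I_n]) ('X - y%:P).
  rewrite [RHS]big_map big_enum /= -char_poly_complexified /A -map_char_poly.
  by rewrite cpL map_prod_XsubC big_map.
by apply/allP => z _; apply/eqP; rewrite -!mu_prod_XsubC eq_prod.
Qed.

Hypothesis L_const : L *m const_mx 1 = 0 :> 'cV_n.

Local Open Scope sesquilinear_scope.

Let conj_complexified m p (M : 'M[R]_(m, p)) : (map_mx toC M)^t* = map_mx toC M^T.
Proof.
apply/matrixP => i j; rewrite !mxE.
by apply/CrealP/complex_realP; eexists.
Qed.

Let trmxC_mul m p q (M : 'M[C]_(m, p)) (N : 'M[C]_(p, q)) :
  (M *m N)^t* = N^t* *m M^t*.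
Proof. by rewrite trmx_mul map_mxM. Qed.

Lemma spectral_below_second_uniq s : sorted_spectrum L s ->
  forall k k', d 0 k < toC s`_1 -> d 0 k' < toC s`_1 -> k = k'.
Proof.
move=> sL k k'; rewrite spectral_diag_real (spectral_diag_real k') !ltcR => dk dk'.
apply/eqP; apply: contraT => kk'.
have := count_map_enum_gt1 (F := fun i => d 0 i) (p := fun z => complex.Re z < s`_1)
  kk' dk dk'.
rewrite -(permP (sorted_spectrum_perm sL)) count_map ltnNge.
by case: sL => _ s_sorted _; rewrite (count_lt_second 0 s_sorted).
Qed.

Let P_unitary : P \is unitarymx := spectral_unitarymx A.

Let A_diag : A = P^t* *m diag_mx d *m P.
Proof. by rewrite -invmx_unitary // complexified_spectral. Qed.

Let U := map_mx toC (const_mx 1 : 'rV[R]_n).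

Lemma const_coord_eigen k : (U *m P^t*) 0 k * d 0 k = 0.
Proof.
have UA : U *m A = 0.
  have h : (const_mx 1 : 'rV[R]_n) *m L = 0.
    by apply: trmx_inj; rewrite trmx_mul L_sym trmx_const L_const trmx0.
  by rewrite /U /A -map_mxM h map_mx0.
have : U *m A *m P^t* = 0 by rewrite UA mul0mx.
rewrite A_diag !mulmxA mulmxtVK // => /matrixP /(_ 0 k).
by rewrite mul_mx_diag !mxE.
Qed.

Lemma const_coord_neq0 : (0 < n)%N -> exists k, (U *m P^t*) 0 k != 0.
Proof.
move=> n_gt0; apply/existsP; apply: contraT; rewrite negb_exists => /forallP U0.
have : U 0 (Ordinal n_gt0) = 0.
  rewrite -(mulmxKtV U P_unitary) // mxE big1 // => k _.
  by move: (U0 k); rewrite negbK => /eqP ->; rewrite mul0r.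
by rewrite !mxE => /eqP; rewrite oner_eq0.
Qed.

Lemma second_eigenvalue_le_rayleigh s (x : 'rV[R]_n) :
  sorted_spectrum L s -> 0 < s`_1 -> x *m const_mx 1 = 0 :> 'M_1 ->
  s`_1 * (x *m x^T) 0 0 <= (x *m L *m x^T) 0 0.
Proof.
move=> sL s1_gt0 x1.
have n_gt0 : (0 < n)%N.
  have [size_s _ _] := sL; rewrite -size_s.
  by case: (s) s1_gt0 => [|? [|? ?]] //; rewrite ltxx.
pose X := map_mx toC x; pose Y := X *m P^t*.
have YU : \sum_k Y 0 k * ((U *m P^t*) 0 k)^* = 0.
  have : Y *m (U *m P^t*)^t* = 0.
    rewrite /Y trmxC_mul trmxCK mulmxA mulmxKtV // /U /X conj_complexified.
    by rewrite -map_mxM trmx_const x1 map_mx0.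
  move=> /matrixP /(_ 0 0); rewrite mxE [RHS]mxE => YU0; rewrite -[RHS]YU0.
  by apply: eq_bigr => k _; rewrite !mxE.
have s1C : (0 : C) < toC s`_1 by rewrite ltcR.
have d_real k : d 0 k \is Num.real.
  exact/mxOverP/hermitian_spectral_diag_real/hermsym_complexified.
have := diag_form_ge s1C d_real (spectral_below_second_uniq sL) const_coord_eigen
  (const_coord_neq0 n_gt0) YU.
have -> : \sum_k Y 0 k * (Y 0 k)^* = (X *m X^t*) 0 0.
  have -> : X *m X^t* = Y *m Y^t* by rewrite /Y trmxC_mul trmxCK mulmxA mulmxKtV.
  by rewrite mxE; apply: eq_bigr => k _; rewrite !mxE.
have -> : \sum_k Y 0 k * d 0 k * (Y 0 k)^* = (X *m A *m X^t*) 0 0.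
  have -> : X *m A *m X^t* = Y *m diag_mx d *m Y^t*.
    by rewrite A_diag /Y trmxC_mul trmxCK !mulmxA.
  by rewrite mul_mx_diag mxE; apply: eq_bigr => k _; rewrite !mxE.
by rewrite /X /A conj_complexified -!map_mxM !mxE -rmorphM lecR.
Qed.

End SymmetricSpectrum.

Definition adj_rel n (nb : nat -> seq nat) : rel 'I_n :=
  fun i j => val j \in nb (val i).

(* The last clause, that every vertex but [0] has a smaller neighbour, makes the
   graph connected. *)
Definition quartic_adjacency n (nb : nat -> seq nat) : Prop :=
  [/\ forall i, (i < n)%N ->
        [/\ uniq (nb i), size (nb i) = 4%N, all (fun j => j < n)%N (nb i)
          & i \notin nb i],
      forall i j, (i < n)%N -> (j < n)%N -> j \in nb i -> i \in nb j
    & forall i, (0 < i < n)%N -> has (fun j => j < i)%N (nb i)].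

Lemma big_ord_in_seq (R : Type) (idx : R) (op : SemiGroup.com_law R) n
    (s : seq nat) (F : nat -> R) :
  uniq s -> all (fun j => j < n)%N s ->
  \big[op/idx]_(j < n | val j \in s) F j = \big[op/idx]_(j <- s) F j.
Proof.
move=> s_uniq s_lt; rewrite -(big_mkord (fun j => j \in s)) -big_filter.
apply/perm_big/uniq_perm => [||j]; rewrite ?filter_uniq ?iota_uniq //.
rewrite mem_filter mem_iota add0n subn0.
by case js: (j \in s) => //=; apply: (allP s_lt).
Qed.

Definition laplacian_form (R : nzRingType) n (nb : nat -> seq nat) (x : nat -> R) : R :=
  \sum_(0 <= i < n) x i * (4%:R * x i - \sum_(j <- nb i) x j).

Definition sqnorm (R : nzRingType) n (x : nat -> R) : R := \sum_(0 <= i < n) x i ^+ 2.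

Section AdjacencyLists.
Variables (n : nat) (nb : nat -> seq nat).
Hypothesis nb_ok : quartic_adjacency n nb.
Local Notation e := (@adj_rel n nb).

Lemma adj_rel_sym : symmetric e.
Proof.
case: nb_ok => _ nb_sym _ i j; rewrite /adj_rel.
by apply/idP/idP; apply: nb_sym; rewrite ?ltn_ord.
Qed.

Lemma adj_rel_irr : irreflexive e.
Proof. by case: nb_ok => nb_i _ _ i; case: (nb_i _ (ltn_ord i)) => _ _ _ /negbTE. Qed.

Lemma adj_rel_degree i : degree e i = 4%N.
Proof.
case: nb_ok => /(_ _ (ltn_ord i)) [nb_uniq nb_size nb_lt _] _ _.
rewrite /degree cardsE -sum1_card /=.
by rewrite (big_ord_in_seq _ _ (fun=> 1%N) nb_uniq nb_lt) sum1_size nb_size.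
Qed.

Lemma adj_rel_connected : connected_graph e.
Proof.
case: nb_ok => _ _ nb_down i j.
have n_gt0 : (0 < n)%N by apply: leq_ltn_trans (ltn_ord i).
suff from0 k : connect e (Ordinal n_gt0) k.
  apply: connect_trans (from0 j).
  by rewrite (sym_connect_sym adj_rel_sym); apply: from0.
case: k => k; elim/ltn_ind: k => -[|k] IH k_lt.
  by rewrite (bool_irrelevance k_lt n_gt0) connect0.
have /hasP [l l_nb lk] := nb_down k.+1 k_lt.
apply: connect_trans (IH l lk (ltn_trans lk k_lt)) _.
by apply: connect1; rewrite adj_rel_sym.
Qed.

Lemma adj_rel_connected_quartic : connected_quartic e.
Proof.
split; last exact: adj_rel_connected; last exact: adj_rel_degree.
by split; [exact: adj_rel_irr | exact: adj_rel_sym].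
Qed.

Variable R : rcfType.
Local Notation L := (laplacian R e).

Lemma laplacian_adj_row (x : nat -> R) (i : 'I_n) :
  \sum_(j < n) L i j * x j = 4%:R * x i - \sum_(j <- nb i) x j.
Proof.
case: nb_ok => /(_ _ (ltn_ord i)) [nb_uniq _ nb_lt _] _ _.
rewrite -(big_ord_in_seq _ _ x nb_uniq nb_lt) (big_mkcond (fun j : 'I_n => val j \in nb i)).
rewrite (eq_bigr (fun j : 'I_n => (if i == j then (degree e i)%:R else 0) * x j
    - (e i j)%:R * x j)) => [|j _]; last by rewrite mxE mulrBl.
rewrite sumrB (bigD1 i) //= big1 ?addr0 => [|j /negbTE ji]; last first.
  by rewrite eq_sym ji mul0r.
rewrite eqxx adj_rel_degree; congr (_ - _); apply: eq_bigr => j _.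
by rewrite /adj_rel; case: (val j \in nb i); rewrite ?mul1r ?mul0r.
Qed.

Lemma laplacian_adj_sym : L^T = L.
Proof. by apply/matrixP => i j; rewrite !mxE adj_rel_sym eq_sym; case: eqP => [->|]. Qed.

Lemma laplacian_adj_const : L *m const_mx 1 = 0 :> 'cV_n.
Proof.
apply/colP => i; rewrite !mxE.
under eq_bigr => j _ do rewrite [const_mx _ _ _]mxE.
rewrite (laplacian_adj_row (fun=> 1)).
case: nb_ok => /(_ _ (ltn_ord i)) [_ nb_size _ _] _ _.
by rewrite big_const_seq count_predT nb_size mulr1 iter_addr addr0 subrr.
Qed.

Lemma laplacian_formE (x : nat -> R) :
  (\row_(i < n) x i *m L *m (\row_(i < n) x i)^T) 0 0 = laplacian_form n nb x.
Proof.
rewrite -mulmxA mxE /laplacian_form big_mkord; apply: eq_bigr => i _.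
rewrite !mxE -laplacian_adj_row; congr (_ * _).
by apply: eq_bigr => j _; rewrite !mxE.
Qed.

End AdjacencyLists.

Lemma row_dot_self (R : comNzRingType) n (x : nat -> R) :
  (\row_(i < n) x i *m (\row_(i < n) x i)^T) 0 0 = sqnorm n x.
Proof. by rewrite mxE /sqnorm big_mkord; apply: eq_bigr => i _; rewrite !mxE expr2. Qed.

Lemma row_mul_const (R : nzRingType) n (x : nat -> R) :
  \sum_(0 <= i < n) x i = 0 -> \row_(i < n) x i *m const_mx 1 = 0 :> 'M_1.
Proof.
rewrite big_mkord => x_sum0; apply/matrixP => i j; rewrite !ord1 !mxE -[RHS]x_sum0.
by apply: eq_bigr => k _; rewrite !mxE mulr1.
Qed.

Definition is_min_alg_conn (R : rcfType) n (mu : R) : Prop :=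
  forall (e' : rel 'I_n) (mu' : R), connected_quartic e' -> alg_conn e' mu' -> mu <= mu'.

Lemma min_alg_conn_lt (R : rcfType) n (mu b : R) (nb : nat -> seq nat) (x : nat -> R) :
  is_min_alg_conn n mu ->
  quartic_adjacency n nb -> \sum_(0 <= i < n) x i = 0 -> 0 < sqnorm n x -> 0 < b ->
  laplacian_form n nb x < b * sqnorm n x -> mu < b.
Proof.
move=> mu_min nb_ok x_sum0 x_norm_gt0 b_gt0 x_form_lt.
have [s sL] := sorted_spectrum_exists (laplacian_adj_sym nb_ok R).
have mu_le : mu <= s`_1 by apply: mu_min (adj_rel_connected_quartic nb_ok) _; exists s.
apply: le_lt_trans mu_le _.
(* The case [s`_1 <= 0] is immediate; splitting on it spares proving that the
   Laplacian is positive semidefinite. *)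
have [s1_le0|s1_gt0] := leP s`_1 0; first exact: le_lt_trans s1_le0 b_gt0.
have := second_eigenvalue_le_rayleigh (laplacian_adj_sym nb_ok R)
  (laplacian_adj_const nb_ok R) sL s1_gt0 (row_mul_const x_sum0).
rewrite (laplacian_formE nb_ok) row_dot_self => rayleigh.
by rewrite -(ltr_pM2r x_norm_gt0) (le_lt_trans rayleigh).
Qed.

(* Test vectors have binary integer entries so that certificates can be
   checked by [vm_compute]. *)
Definition Zr (R : nzRingType) : Z -> R := intr \o int_of_Z.

Lemma laplacian_form_rmorph (R S : nzRingType) (f : {rmorphism R -> S}) n nb x :
  f (laplacian_form n nb x) = laplacian_form n nb (f \o x).
Proof.
rewrite rmorph_sum; apply: eq_bigr => i _.
by rewrite rmorphM rmorphB rmorphM rmorph_nat rmorph_sum.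
Qed.

Lemma sqnorm_rmorph (R S : nzRingType) (f : {rmorphism R -> S}) n x :
  f (sqnorm n x) = sqnorm n (f \o x).
Proof. by rewrite rmorph_sum; apply: eq_bigr => i _; rewrite rmorphXn. Qed.

Lemma min_alg_conn_lt_Zr (R : rcfType) n (mu : R) nb (x : nat -> Z) (b : nat) :
  is_min_alg_conn n mu ->
  quartic_adjacency n nb -> \sum_(0 <= i < n) x i = 0 -> 0 < sqnorm n x -> (0 < b)%N ->
  laplacian_form n nb x * 1000%:R < sqnorm n x * b%:R ->
  mu < b%:R / 1000%:R.
Proof.
move=> mu_min nb_ok x_sum0 x_norm_gt0 b_gt0 x_form_lt.
apply: (min_alg_conn_lt (x := Zr R \o x) mu_min nb_ok).
- by rewrite -rmorph_sum x_sum0 rmorph0.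
- by rewrite -sqnorm_rmorph /= ltr0z; lia.
- by rewrite divr_gt0 ?ltr0n.
rewrite -sqnorm_rmorph -laplacian_form_rmorph mulrC mulrA ltr_pdivlMr ?ltr0n //.
by rewrite -!(rmorph_nat (Zr R)) -!rmorphM /= ltr_int; lia.
Qed.

Definition quartic_adjacencyb n (nb : nat -> seq nat) : bool :=
  [&& all (fun i => [&& uniq (nb i), size (nb i) == 4%N, all (fun j => j < n)%N (nb i)
                      & i \notin nb i]) (iota 0 n),
      all (fun i => all (fun j => i \in nb j) (nb i)) (iota 0 n)
    & all (fun i => has (fun j => j < i)%N (nb i)) (iota 1 n.-1)].

Lemma quartic_adjacencyP n nb : reflect (quartic_adjacency n nb) (quartic_adjacencyb n nb).
Proof.
have iota0 i : (i \in iota 0 n) = (i < n)%N by rewrite mem_iota.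
have iota1 i : (i \in iota 1 n.-1) = (0 < i < n)%N by rewrite mem_iota; apply/idP/idP; lia.
apply: (iffP and3P) => [[/allP nb_i /allP nb_sym /allP nb_down]|[nb_i nb_sym nb_down]].
  split=> [i|i j|i].
  - by rewrite -iota0 => /nb_i /and4P[-> /eqP -> -> ->].
  - by rewrite -iota0 => /nb_sym /allP nb_i_sym _; apply: nb_i_sym.
  - by rewrite -iota1 => /nb_down.
split; apply/allP => i; rewrite ?iota0 ?iota1 => i_lt.
- by have [-> -> -> ->] := nb_i i i_lt; rewrite eqxx.
- by apply/allP => j j_nb; apply: nb_sym => //; have [_ _ /allP/(_ j j_nb) ->] := nb_i i i_lt.
- exact: nb_down.
Qed.

Definition certifies n (nb : nat -> seq nat) (x : nat -> Z) (b : nat) : bool :=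
  [&& quartic_adjacencyb n nb, \sum_(0 <= i < n) x i == 0, 0 < sqnorm n x, (0 < b)%N
    & laplacian_form n nb x * 1000%:R < sqnorm n x * b%:R].

Lemma certifies_min_alg_conn_lt (R : rcfType) n (mu : R) nb x b :
  is_min_alg_conn n mu ->
  certifies n nb x b -> mu < b%:R / 1000%:R.
Proof.
move=> mu_min /and5P[/quartic_adjacencyP nb_ok /eqP x_sum0 x_norm_gt0 b_gt0 x_form_lt].
exact: min_alg_conn_lt_Zr mu_min nb_ok x_sum0 x_norm_gt0 b_gt0 x_form_lt.
Qed.

Definition end_gadget : seq (seq nat) :=
  [:: [:: 1;2;3;5]; [:: 0;2;3;4]; [:: 0;1;3;4]; [:: 0;1;2;4]; [:: 1;2;3;5]; [:: 0;4;6;7];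
      [:: 5;7;8;9]; [:: 5;6;8;9]; [:: 6;7;9;10]; [:: 6;7;8;10]; [:: 8;9;11;12];
      [:: 10;12;13;14]; [:: 10;11;13;14]; [:: 11;12;14;16]; [:: 11;12;13;15];
      [:: 14;16;17;18]; [:: 13;15;17;19]; [:: 15;16;18;20]].

Definition ray_nb (i : nat) : seq nat :=
  if (i < 18)%N then nth [::] end_gadget i else [:: i - 3; i - 1; i + 1; i + 3]%N.

Definition mirror_nb (n i : nat) : seq nat :=
  if (i < n - i)%N then ray_nb i else [seq (n.-1 - j)%N | j <- ray_nb (n.-1 - i)].

Definition ray_x (i : nat) : Z :=
  nth 0 [:: 98; 100; 100; 100; 98; 88; 76; 76; 68; 68; 50; 31; 31; 21; 21] i.

Definition mirror_x (n i : nat) : Z :=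
  if (i < n - i)%N then ray_x i else - ray_x (n.-1 - i).

Lemma ray_nb_mid i : (18 <= i)%N -> ray_nb i = [:: i - 3; i - 1; i + 1; i + 3]%N.
Proof. by move=> i_ge; rewrite /ray_nb ltnNge i_ge. Qed.

Lemma all_iota_cases (P : nat -> bool) k :
  all P (iota 0 k) -> (forall i, (k <= i)%N -> P i) -> forall i, P i.
Proof.
move=> /allP P_small P_large i; case: (ltnP i k) => [i_lt|]; last exact: P_large.
by apply: P_small; rewrite mem_iota.
Qed.

Lemma ray_nb_simple i : [&& uniq (ray_nb i), size (ray_nb i) == 4%N & i \notin ray_nb i].
Proof.
move: i; apply: (all_iota_cases (k := 21)) => // i i_gt.
by rewrite ray_nb_mid /= ?inE; lia.
Qed.

Lemma ray_nb_sym i j : j \in ray_nb i -> i \in ray_nb j.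
Proof.
move: j; apply/allP; move: i; apply: (all_iota_cases (k := 21)) => // i i_gt.
rewrite ray_nb_mid; last lia.
by rewrite /= !ray_nb_mid ?inE; lia.
Qed.

Lemma ray_nb_succ_pred i : (i.+1 \in ray_nb i) && ((0 < i)%N ==> (i.-1 \in ray_nb i)).
Proof.
move: i; apply: (all_iota_cases (k := 21)) => // i i_gt.
by rewrite ray_nb_mid ?inE; lia.
Qed.

Lemma ray_nb_le i j : j \in ray_nb i -> (j <= i + 5)%N.
Proof.
move: j; apply/allP; move: i; apply: (all_iota_cases (k := 21)) => // i i_gt.
by rewrite ray_nb_mid /=; lia.
Qed.

Lemma ray_x_out i : (15 <= i)%N -> ray_x i = 0.
Proof. by move=> i_ge; rewrite /ray_x nth_default. Qed.

Lemma sum_mirror_split (V : nmodType) (F G : nat -> V) k n : (k.*2 <= n)%N ->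
  (forall i, (k <= i)%N -> F i = 0) -> (forall i, (k <= i)%N -> G i = 0) ->
  \sum_(0 <= i < n) (if (i < n - i)%N then F i else G (n.-1 - i)%N) =
  \sum_(0 <= i < k) F i + \sum_(0 <= i < k) G i.
Proof.
move=> n_ge F_out G_out.
rewrite (@big_cat_nat _ _ _ k 0 n) //=; last lia.
rewrite (@big_cat_nat _ _ _ (n - k) k n) //=; [|lia|lia].
rewrite [X in _ + (X + _)]big1_seq ?add0r => [|i /andP[_]]; last first.
  by rewrite mem_index_iota => /andP[? ?]; case: ltnP => _; [apply: F_out | apply: G_out]; lia.
congr (_ + _); first by apply: eq_big_nat => i /andP[_ ?]; rewrite ifT //; lia.
rewrite -[(n - k)%N in X in X = _]add0n big_addn.
rewrite (_ : (n - (n - k))%N = k); last lia.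
rewrite [RHS]big_nat_rev /=; apply: eq_big_nat => i /andP[_ ?].
by rewrite ifF; [congr G|]; lia.
Qed.

Section Mirror.
Variable n : nat.
Hypothesis n_ge50 : (50 <= n)%N.

Lemma mirror_nb_simple i : (i < n)%N ->
  [/\ uniq (mirror_nb n i), size (mirror_nb n i) = 4%N,
      all (fun j => j < n)%N (mirror_nb n i) & i \notin mirror_nb n i].
Proof.
move=> i_lt; rewrite /mirror_nb; case: ltnP => i_half.
  have /and3P[nb_uniq /eqP nb_size i_nb] := ray_nb_simple i.
  by split=> //; apply/allP => j /ray_nb_le; lia.
set m := (n.-1 - i)%N; have m_half : (m <= n./2)%N by lia.
have /and3P[nb_uniq /eqP nb_size m_nb] := ray_nb_simple m.
split; first by rewrite map_inj_in_uniq // => a b /ray_nb_le a_le /ray_nb_le b_le; lia.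
- by rewrite size_map.
- by apply/allP => j /mapP [k _ ->]; lia.
apply: contra m_nb => /mapP [k k_nb i_k].
have k_m : k = m by move/ray_nb_le: k_nb; lia.
by rewrite -[X in X \in _]k_m.
Qed.

Lemma mirror_nb_sym i j : (i < n)%N -> (j < n)%N ->
  j \in mirror_nb n i -> i \in mirror_nb n j.
Proof.
move=> i_lt j_lt; rewrite /mirror_nb.
case: (ltnP i (n - i)) => i_half; case: (ltnP j (n - j)) => j_half.
- exact: ray_nb_sym.
- move=> j_nb; have j_le := ray_nb_le j_nb.
  rewrite ray_nb_mid in j_nb; last lia.
  rewrite ray_nb_mid; last lia.
  by rewrite /= !inE in j_nb *; lia.
- case/mapP => k k_nb j_k; have k_le := ray_nb_le k_nb.
  rewrite ray_nb_mid in k_nb; last lia.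
  rewrite ray_nb_mid; last lia.
  by rewrite !inE in k_nb *; lia.
case/mapP => k k_nb j_k; have k_le := ray_nb_le k_nb.
have -> : (n.-1 - j)%N = k by lia.
by apply/mapP; exists (n.-1 - i)%N; [exact: ray_nb_sym | lia].
Qed.

Lemma mirror_nb_down i : (0 < i < n)%N -> has (fun j => j < i)%N (mirror_nb n i).
Proof.
move=> /andP[i_gt0 i_lt]; rewrite /mirror_nb; case: ltnP => i_half.
  apply/hasP; exists i.-1; last lia.
  by case/andP: (ray_nb_succ_pred i) => _ /implyP; apply.
apply/hasP; exists (n.-1 - (n.-1 - i).+1)%N; last lia.
by apply: map_f; case/andP: (ray_nb_succ_pred (n.-1 - i)).
Qed.

Lemma mirror_nb_ok : quartic_adjacency n (mirror_nb n).
Proof. split; [exact: mirror_nb_simple | exact: mirror_nb_sym | exact: mirror_nb_down]. Qed.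

Let ray_term i := ray_x i * (4%:R * ray_x i - \sum_(j <- ray_nb i) ray_x j).

Lemma ray_term_out i : (15 <= i)%N -> ray_term i = 0.
Proof. by move=> i_ge; rewrite /ray_term ray_x_out // mul0r. Qed.

Lemma mirror_term i : (i < n)%N ->
  mirror_x n i * (4%:R * mirror_x n i - \sum_(j <- mirror_nb n i) mirror_x n j) =
  if (i < n - i)%N then ray_term i else ray_term (n.-1 - i).
Proof.
move=> i_lt; rewrite /mirror_nb /mirror_x; case: ltnP => i_half.
  case: (ltnP i 15) => i_lt15; last by rewrite ray_term_out // ray_x_out // mul0r.
  congr (_ * (_ - _)); apply: eq_big_seq => j /ray_nb_le j_le.
  by rewrite ifT //; lia.
set m := (n.-1 - i)%N.
case: (ltnP m 15) => m_lt15; last by rewrite ray_term_out // ray_x_out // oppr0 mul0r.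
rewrite big_map (eq_big_seq (fun j => - ray_x j)) => [|j /ray_nb_le j_le].
  by rewrite sumrN /ray_term; ring.
by rewrite ifF; [congr (- ray_x _)|]; lia.
Qed.

Lemma mirror_laplacian_form :
  laplacian_form n (mirror_nb n) (mirror_x n) = laplacian_form 15 ray_nb ray_x *+ 2.
Proof.
rewrite /laplacian_form (eq_big_nat _ _ (F2 := fun i =>
  if (i < n - i)%N then ray_term i else ray_term (n.-1 - i))) => [|i /andP[_]].
  by rewrite (sum_mirror_split (k := 15)) //; [lia | exact: ray_term_out | exact: ray_term_out].
exact: mirror_term.
Qed.

Lemma mirror_sqnorm : sqnorm n (mirror_x n) = sqnorm 15 ray_x *+ 2.
Proof.
have ray_x2_out i : (15 <= i)%N -> ray_x i ^+ 2 = 0 by move/ray_x_out ->; rewrite expr0n.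
rewrite /sqnorm (eq_big_nat _ _ (F2 := fun i =>
  if (i < n - i)%N then ray_x i ^+ 2 else ray_x (n.-1 - i) ^+ 2)) => [|i _].
  pose ray_x2 i := ray_x i ^+ 2.
  by rewrite (sum_mirror_split (k := 15) (F := ray_x2) (G := ray_x2)) //; lia.
by rewrite /mirror_x; case: ifP; rewrite ?sqrrN.
Qed.

Lemma mirror_x_sum : \sum_(0 <= i < n) mirror_x n i = 0.
Proof.
rewrite (sum_mirror_split (k := 15) (F := ray_x) (G := fun i => - ray_x i)) //; last 3 first.
- lia.
- exact: ray_x_out.
- by move=> i /ray_x_out ->; rewrite oppr0.
by rewrite sumrN subrr.
Qed.

End Mirror.

Lemma mirror_min_alg_conn_lt (R : rcfType) n (mu : R) : (50 <= n)%N ->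
  is_min_alg_conn n mu -> mu < 59%:R / 1000%:R.
Proof.
move=> n_ge mu_min.
apply: (min_alg_conn_lt_Zr mu_min (mirror_nb_ok n_ge) (mirror_x_sum n_ge)) => //.
  by rewrite mirror_sqnorm // /sqnorm unlock; vm_compute.
rewrite mirror_laplacian_form // mirror_sqnorm //.
by rewrite /laplacian_form /sqnorm unlock; vm_compute.
Qed.

Definition small_certificates : seq (seq (seq nat) * seq Z) := [::
  ([:: [:: 1; 2; 3; 4]; [:: 0; 5; 2; 3]; [:: 0; 5; 1; 3]; [:: 0; 5; 1; 2];
      [:: 0; 5; 6; 7]; [:: 1; 2; 3; 4]; [:: 8; 9; 10; 4]; [:: 8; 9; 10; 4];
      [:: 6; 7; 9; 10]; [:: 6; 7; 8; 10]; [:: 6; 7; 8; 9]],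
   [:: -82; -100; -100; -100; 0; -82; 82; 82; 100; 100; 100]);
  ([:: [:: 1; 2; 3; 4]; [:: 0; 5; 2; 3]; [:: 0; 5; 1; 3]; [:: 0; 5; 1; 2];
      [:: 0; 5; 6; 7]; [:: 1; 2; 3; 4]; [:: 8; 9; 7; 4]; [:: 6; 10; 11; 4];
      [:: 10; 11; 9; 6]; [:: 8; 10; 11; 6]; [:: 8; 11; 9; 7]; [:: 8; 10; 9; 7]],
   [:: -83; -100; -100; -100; -12; -85; 62; 62; 89; 89; 89; 89]);
  ([:: [:: 1; 2; 3; 4]; [:: 0; 2; 3; 5]; [:: 0; 1; 3; 5]; [:: 0; 1; 2; 4];
      [:: 0; 3; 5; 6]; [:: 4; 1; 2; 6]; [:: 4; 5; 7; 8]; [:: 9; 10; 8; 6];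
      [:: 7; 11; 12; 6]; [:: 11; 12; 10; 7]; [:: 9; 11; 12; 7]; [:: 9; 12; 10; 8];
      [:: 9; 11; 10; 8]],
   [:: -100; -100; -100; -100; -73; -73; 0; 73; 73; 100; 100; 100; 100]);
  ([:: [:: 1; 2; 3; 4]; [:: 0; 2; 3; 5]; [:: 0; 1; 3; 5]; [:: 0; 1; 2; 4];
      [:: 0; 3; 5; 6]; [:: 4; 1; 2; 6]; [:: 4; 5; 7; 8]; [:: 9; 10; 8; 6];
      [:: 11; 10; 7; 6]; [:: 12; 13; 11; 7]; [:: 12; 13; 7; 8]; [:: 12; 13; 9; 8];
      [:: 13; 11; 9; 10]; [:: 12; 11; 9; 10]],
   [:: -101; -100; -100; -100; -76; -76; -10; 58; 58; 89; 81; 89; 94; 94]);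
  ([:: [:: 1; 2; 3; 4]; [:: 0; 2; 3; 4]; [:: 0; 1; 3; 5]; [:: 0; 1; 2; 6];
      [:: 0; 1; 6; 5]; [:: 2; 4; 6; 7]; [:: 3; 4; 5; 7]; [:: 6; 5; 8; 9];
      [:: 10; 11; 9; 7]; [:: 12; 11; 8; 7]; [:: 13; 14; 12; 8]; [:: 13; 14; 8; 9];
      [:: 13; 14; 10; 9]; [:: 14; 12; 10; 11]; [:: 13; 12; 10; 11]],
   [:: 100; 100; 95; 95; 88; 66; 66; 0; -66; -66; -95; -88; -95; -100; -100]);
  ([:: [:: 1; 2; 3; 4]; [:: 0; 5; 2; 3]; [:: 0; 5; 1; 3]; [:: 0; 5; 1; 2];
      [:: 0; 5; 6; 7]; [:: 1; 2; 3; 4]; [:: 7; 8; 9; 4]; [:: 6; 8; 9; 4];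
      [:: 6; 7; 9; 10]; [:: 6; 7; 8; 10]; [:: 8; 9; 11; 12]; [:: 13; 14; 15; 10];
      [:: 13; 14; 15; 10]; [:: 11; 12; 14; 15]; [:: 11; 12; 13; 15];
      [:: 11; 12; 13; 14]],
   [:: -92; -100; -100; -100; -54; -92; -11; -11; 11; 11; 54; 92; 92; 100; 100; 100]);
  ([:: [:: 1; 2; 3; 4]; [:: 0; 5; 2; 3]; [:: 0; 5; 1; 3]; [:: 0; 5; 1; 2];
      [:: 0; 5; 6; 7]; [:: 1; 2; 3; 4]; [:: 7; 8; 9; 4]; [:: 6; 8; 9; 4];
      [:: 6; 7; 9; 10]; [:: 6; 7; 8; 10]; [:: 8; 9; 11; 12]; [:: 13; 14; 12; 10];
      [:: 11; 15; 16; 10]; [:: 15; 16; 14; 11]; [:: 13; 15; 16; 11];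
      [:: 13; 16; 14; 12]; [:: 13; 15; 14; 12]],
   [:: 91; 100; 100; 100; 58; 93; 20; 20; -1; -1; -42; -81; -81; -94; -94; -94; -94]);
  ([:: [:: 1; 2; 3; 4]; [:: 0; 2; 3; 5]; [:: 0; 1; 3; 5]; [:: 0; 1; 2; 4];
      [:: 0; 3; 5; 6]; [:: 4; 1; 2; 6]; [:: 4; 5; 7; 8]; [:: 8; 9; 10; 6];
      [:: 7; 9; 10; 6]; [:: 7; 8; 10; 11]; [:: 7; 8; 9; 11]; [:: 9; 10; 12; 13];
      [:: 14; 15; 13; 11]; [:: 12; 16; 17; 11]; [:: 16; 17; 15; 12];
      [:: 14; 16; 17; 12]; [:: 14; 17; 15; 13]; [:: 14; 16; 15; 13]],
   [:: 100; 100; 100; 100; 87; 87; 50; 10; 10; -10; -10; -50; -87; -87; -100; -100;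
      -100; -100]);
  ([:: [:: 1; 2; 3; 4]; [:: 0; 2; 3; 5]; [:: 0; 1; 3; 5]; [:: 0; 1; 2; 4];
      [:: 0; 3; 5; 6]; [:: 4; 1; 2; 6]; [:: 4; 5; 7; 8]; [:: 8; 9; 10; 6];
      [:: 7; 9; 10; 6]; [:: 7; 8; 10; 11]; [:: 7; 8; 9; 11]; [:: 9; 10; 12; 13];
      [:: 14; 15; 13; 11]; [:: 16; 15; 12; 11]; [:: 17; 18; 16; 12];
      [:: 17; 18; 12; 13]; [:: 17; 18; 14; 13]; [:: 18; 16; 14; 15];
      [:: 17; 16; 14; 15]],
   [:: 100; 100; 100; 100; 88; 88; 54; 17; 17; -2; -2; -41; -77; -77; -93; -89; -93;
      -95; -95]);
  ([:: [:: 1; 2; 3; 4]; [:: 0; 2; 3; 4]; [:: 0; 1; 3; 5]; [:: 0; 1; 2; 6];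
      [:: 0; 1; 6; 5]; [:: 2; 4; 6; 7]; [:: 3; 4; 5; 7]; [:: 6; 5; 8; 9];
      [:: 9; 10; 11; 7]; [:: 8; 10; 11; 7]; [:: 8; 9; 11; 12]; [:: 8; 9; 10; 12];
      [:: 10; 11; 13; 14]; [:: 15; 16; 14; 12]; [:: 17; 16; 13; 12];
      [:: 18; 19; 17; 13]; [:: 18; 19; 13; 14]; [:: 18; 19; 15; 14];
      [:: 19; 17; 15; 16]; [:: 18; 17; 15; 16]],
   [:: 100; 100; 98; 98; 94; 83; 83; 47; 10; 10; -10; -10; -47; -83; -83; -98; -94; -98;
      -100; -100]);
  ([:: [:: 1; 2; 3; 4]; [:: 0; 5; 2; 3]; [:: 0; 5; 1; 3]; [:: 0; 5; 1; 2];
      [:: 0; 5; 6; 7]; [:: 1; 2; 3; 4]; [:: 7; 8; 9; 4]; [:: 6; 8; 9; 4];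
      [:: 6; 7; 9; 10]; [:: 6; 7; 8; 10]; [:: 8; 9; 11; 12]; [:: 12; 13; 14; 10];
      [:: 11; 13; 14; 10]; [:: 11; 12; 14; 15]; [:: 11; 12; 13; 15];
      [:: 13; 14; 16; 17]; [:: 18; 19; 20; 15]; [:: 18; 19; 20; 15];
      [:: 16; 17; 19; 20]; [:: 16; 17; 18; 20]; [:: 16; 17; 18; 19]],
   [:: -95; -100; -100; -100; -73; -95; -48; -48; -33; -33; 0; 33; 33; 48; 48; 73; 95;
      95; 100; 100; 100]);
  ([:: [:: 1; 2; 3; 4]; [:: 0; 5; 2; 3]; [:: 0; 5; 1; 3]; [:: 0; 5; 1; 2];
      [:: 0; 5; 6; 7]; [:: 1; 2; 3; 4]; [:: 7; 8; 9; 4]; [:: 6; 8; 9; 4];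
      [:: 6; 7; 9; 10]; [:: 6; 7; 8; 10]; [:: 8; 9; 11; 12]; [:: 12; 13; 14; 10];
      [:: 11; 13; 14; 10]; [:: 11; 12; 14; 15]; [:: 11; 12; 13; 15];
      [:: 13; 14; 16; 17]; [:: 18; 19; 17; 15]; [:: 16; 20; 21; 15];
      [:: 20; 21; 19; 16]; [:: 18; 20; 21; 16]; [:: 18; 21; 19; 17];
      [:: 18; 20; 19; 17]],
   [:: -93; -100; -100; -100; -75; -96; -52; -52; -38; -38; -7; 24; 24; 39; 39; 65; 88;
      88; 96; 96; 96; 96]);
  ([:: [:: 1; 2; 3; 4]; [:: 0; 2; 3; 5]; [:: 0; 1; 3; 5]; [:: 0; 1; 2; 4];
      [:: 0; 3; 5; 6]; [:: 4; 1; 2; 6]; [:: 4; 5; 7; 8]; [:: 8; 9; 10; 6];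
      [:: 7; 9; 10; 6]; [:: 7; 8; 10; 11]; [:: 7; 8; 9; 11]; [:: 9; 10; 12; 13];
      [:: 13; 14; 15; 11]; [:: 12; 14; 15; 11]; [:: 12; 13; 15; 16];
      [:: 12; 13; 14; 16]; [:: 14; 15; 17; 18]; [:: 19; 20; 18; 16];
      [:: 17; 21; 22; 16]; [:: 21; 22; 20; 17]; [:: 19; 21; 22; 17];
      [:: 19; 22; 20; 18]; [:: 19; 21; 20; 18]],
   [:: -100; -100; -100; -100; -92; -92; -70; -45; -45; -31; -31; 0; 31; 31; 45; 45; 70;
      92; 92; 100; 100; 100; 100]);
  ([:: [:: 1; 2; 3; 4]; [:: 0; 2; 3; 5]; [:: 0; 1; 3; 5]; [:: 0; 1; 2; 4];
      [:: 0; 3; 5; 6]; [:: 4; 1; 2; 6]; [:: 4; 5; 7; 8]; [:: 8; 9; 10; 6];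
      [:: 7; 9; 10; 6]; [:: 7; 8; 10; 11]; [:: 7; 8; 9; 11]; [:: 9; 10; 12; 13];
      [:: 13; 14; 15; 11]; [:: 12; 14; 15; 11]; [:: 12; 13; 15; 16];
      [:: 12; 13; 14; 16]; [:: 14; 15; 17; 18]; [:: 19; 20; 18; 16];
      [:: 21; 20; 17; 16]; [:: 22; 23; 21; 17]; [:: 22; 23; 17; 18];
      [:: 22; 23; 19; 18]; [:: 23; 21; 19; 20]; [:: 22; 21; 19; 20]],
   [:: -100; -100; -100; -100; -93; -93; -72; -49; -49; -35; -35; -6; 23; 23; 37; 37;
      63; 86; 86; 95; 93; 95; 97; 97]);
  ([:: [:: 1; 2; 3; 4]; [:: 0; 2; 3; 4]; [:: 0; 1; 3; 5]; [:: 0; 1; 2; 6];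
      [:: 0; 1; 6; 5]; [:: 2; 4; 6; 7]; [:: 3; 4; 5; 7]; [:: 6; 5; 8; 9];
      [:: 9; 10; 11; 7]; [:: 8; 10; 11; 7]; [:: 8; 9; 11; 12]; [:: 8; 9; 10; 12];
      [:: 10; 11; 13; 14]; [:: 14; 15; 16; 12]; [:: 13; 15; 16; 12];
      [:: 13; 14; 16; 17]; [:: 13; 14; 15; 17]; [:: 15; 16; 18; 19];
      [:: 20; 21; 19; 17]; [:: 22; 21; 18; 17]; [:: 23; 24; 22; 18];
      [:: 23; 24; 18; 19]; [:: 23; 24; 20; 19]; [:: 24; 22; 20; 21];
      [:: 23; 22; 20; 21]],
   [:: 100; 100; 99; 99; 96; 89; 89; 67; 43; 43; 29; 29; 0; -29; -29; -43; -43; -67;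
      -89; -89; -99; -96; -99; -100; -100]);
  ([:: [:: 1; 2; 3; 4]; [:: 0; 5; 2; 3]; [:: 0; 5; 1; 3]; [:: 0; 5; 1; 2];
      [:: 0; 5; 6; 7]; [:: 1; 2; 3; 4]; [:: 7; 8; 9; 4]; [:: 6; 8; 9; 4];
      [:: 6; 7; 9; 10]; [:: 6; 7; 8; 10]; [:: 8; 9; 11; 12]; [:: 12; 13; 14; 10];
      [:: 11; 13; 14; 10]; [:: 11; 12; 14; 15]; [:: 11; 12; 13; 15];
      [:: 13; 14; 16; 17]; [:: 17; 18; 19; 15]; [:: 16; 18; 19; 15];
      [:: 16; 17; 19; 20]; [:: 16; 17; 18; 20]; [:: 18; 19; 21; 22];
      [:: 23; 24; 25; 20]; [:: 23; 24; 25; 20]; [:: 21; 22; 24; 25];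
      [:: 21; 22; 23; 25]; [:: 21; 22; 23; 24]],
   [:: -97; -100; -100; -100; -83; -97; -66; -66; -55; -55; -31; -6; -6; 6; 6; 31; 55;
      55; 66; 66; 83; 97; 97; 100; 100; 100]);
  ([:: [:: 1; 2; 3; 4]; [:: 0; 5; 2; 3]; [:: 0; 5; 1; 3]; [:: 0; 5; 1; 2];
      [:: 0; 5; 6; 7]; [:: 1; 2; 3; 4]; [:: 7; 8; 9; 4]; [:: 6; 8; 9; 4];
      [:: 6; 7; 9; 10]; [:: 6; 7; 8; 10]; [:: 8; 9; 11; 12]; [:: 12; 13; 14; 10];
      [:: 11; 13; 14; 10]; [:: 11; 12; 14; 15]; [:: 11; 12; 13; 15];
      [:: 13; 14; 16; 17]; [:: 17; 18; 19; 15]; [:: 16; 18; 19; 15];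
      [:: 16; 17; 19; 20]; [:: 16; 17; 18; 20]; [:: 18; 19; 21; 22];
      [:: 23; 24; 22; 20]; [:: 21; 25; 26; 20]; [:: 25; 26; 24; 21];
      [:: 23; 25; 26; 21]; [:: 23; 26; 24; 22]; [:: 23; 25; 24; 22]],
   [:: -98; -100; -100; -100; -84; -97; -68; -68; -58; -58; -36; -12; -12; 0; 0; 25; 48;
      48; 59; 59; 76; 92; 92; 98; 98; 98; 98]);
  ([:: [:: 1; 2; 3; 4]; [:: 0; 2; 3; 5]; [:: 0; 1; 3; 5]; [:: 0; 1; 2; 4];
      [:: 0; 3; 5; 6]; [:: 4; 1; 2; 6]; [:: 4; 5; 7; 8]; [:: 8; 9; 10; 6];
      [:: 7; 9; 10; 6]; [:: 7; 8; 10; 11]; [:: 7; 8; 9; 11]; [:: 9; 10; 12; 13];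
      [:: 13; 14; 15; 11]; [:: 12; 14; 15; 11]; [:: 12; 13; 15; 16];
      [:: 12; 13; 14; 16]; [:: 14; 15; 17; 18]; [:: 18; 19; 20; 16];
      [:: 17; 19; 20; 16]; [:: 17; 18; 20; 21]; [:: 17; 18; 19; 21];
      [:: 19; 20; 22; 23]; [:: 24; 25; 23; 21]; [:: 22; 26; 27; 21];
      [:: 26; 27; 25; 22]; [:: 24; 26; 27; 22]; [:: 24; 27; 25; 23];
      [:: 24; 26; 25; 23]],
   [:: 100; 100; 100; 100; 95; 95; 80; 63; 63; 53; 53; 30; 6; 6; -6; -6; -30; -53; -53;
      -63; -63; -80; -95; -95; -100; -100; -100; -100]);
  ([:: [:: 1; 2; 3; 4]; [:: 0; 2; 3; 5]; [:: 0; 1; 3; 5]; [:: 0; 1; 2; 4];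
      [:: 0; 3; 5; 6]; [:: 4; 1; 2; 6]; [:: 4; 5; 7; 8]; [:: 8; 9; 10; 6];
      [:: 7; 9; 10; 6]; [:: 7; 8; 10; 11]; [:: 7; 8; 9; 11]; [:: 9; 10; 12; 13];
      [:: 13; 14; 15; 11]; [:: 12; 14; 15; 11]; [:: 12; 13; 15; 16];
      [:: 12; 13; 14; 16]; [:: 14; 15; 17; 18]; [:: 18; 19; 20; 16];
      [:: 17; 19; 20; 16]; [:: 17; 18; 20; 21]; [:: 17; 18; 19; 21];
      [:: 19; 20; 22; 23]; [:: 24; 25; 23; 21]; [:: 26; 25; 22; 21];
      [:: 27; 28; 26; 22]; [:: 27; 28; 22; 23]; [:: 27; 28; 24; 23];
      [:: 28; 26; 24; 25]; [:: 27; 26; 24; 25]],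
   [:: -102; -100; -100; -100; -95; -95; -81; -65; -65; -55; -55; -34; -11; -11; 1; 1;
      24; 46; 46; 56; 56; 74; 90; 90; 97; 95; 97; 98; 98]);
  ([:: [:: 1; 2; 3; 4]; [:: 0; 2; 3; 4]; [:: 0; 1; 3; 5]; [:: 0; 1; 2; 6];
      [:: 0; 1; 6; 5]; [:: 2; 4; 6; 7]; [:: 3; 4; 5; 7]; [:: 6; 5; 8; 9];
      [:: 9; 10; 11; 7]; [:: 8; 10; 11; 7]; [:: 8; 9; 11; 12]; [:: 8; 9; 10; 12];
      [:: 10; 11; 13; 14]; [:: 14; 15; 16; 12]; [:: 13; 15; 16; 12];
      [:: 13; 14; 16; 17]; [:: 13; 14; 15; 17]; [:: 15; 16; 18; 19];
      [:: 19; 20; 21; 17]; [:: 18; 20; 21; 17]; [:: 18; 19; 21; 22];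
      [:: 18; 19; 20; 22]; [:: 20; 21; 23; 24]; [:: 25; 26; 24; 22];
      [:: 27; 26; 23; 22]; [:: 28; 29; 27; 23]; [:: 28; 29; 23; 24];
      [:: 28; 29; 25; 24]; [:: 29; 27; 25; 26]; [:: 28; 27; 25; 26]],
   [:: 100; 100; 99; 99; 97; 93; 93; 77; 60; 60; 50; 50; 28; 6; 6; -6; -6; -28; -50;
      -50; -60; -60; -77; -93; -93; -99; -97; -99; -100; -100]);
  ([:: [:: 1; 2; 3; 4]; [:: 0; 5; 2; 3]; [:: 0; 5; 1; 3]; [:: 0; 5; 1; 2];
      [:: 0; 5; 6; 7]; [:: 1; 2; 3; 4]; [:: 7; 8; 9; 4]; [:: 6; 8; 9; 4];
      [:: 6; 7; 9; 10]; [:: 6; 7; 8; 10]; [:: 8; 9; 11; 12]; [:: 12; 13; 14; 10];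
      [:: 11; 13; 14; 10]; [:: 11; 12; 14; 15]; [:: 11; 12; 13; 15];
      [:: 13; 14; 16; 17]; [:: 17; 18; 19; 15]; [:: 16; 18; 19; 15];
      [:: 16; 17; 19; 20]; [:: 16; 17; 18; 20]; [:: 18; 19; 21; 22];
      [:: 22; 23; 24; 20]; [:: 21; 23; 24; 20]; [:: 21; 22; 24; 25];
      [:: 21; 22; 23; 25]; [:: 23; 24; 26; 27]; [:: 28; 29; 30; 25];
      [:: 28; 29; 30; 25]; [:: 26; 27; 29; 30]; [:: 26; 27; 28; 30];
      [:: 26; 27; 28; 29]],
   [:: -98; -100; -100; -100; -88; -98; -76; -76; -68; -68; -50; -31; -31; -21; -21; 0;
      21; 21; 31; 31; 50; 68; 68; 76; 76; 88; 98; 98; 100; 100; 100]);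
  ([:: [:: 1; 2; 3; 4]; [:: 0; 5; 2; 3]; [:: 0; 5; 1; 3]; [:: 0; 5; 1; 2];
      [:: 0; 5; 6; 7]; [:: 1; 2; 3; 4]; [:: 7; 8; 9; 4]; [:: 6; 8; 9; 4];
      [:: 6; 7; 9; 10]; [:: 6; 7; 8; 10]; [:: 8; 9; 11; 12]; [:: 12; 13; 14; 10];
      [:: 11; 13; 14; 10]; [:: 11; 12; 14; 15]; [:: 11; 12; 13; 15];
      [:: 13; 14; 16; 17]; [:: 17; 18; 19; 15]; [:: 16; 18; 19; 15];
      [:: 16; 17; 19; 20]; [:: 16; 17; 18; 20]; [:: 18; 19; 21; 22];
      [:: 22; 23; 24; 20]; [:: 21; 23; 24; 20]; [:: 21; 22; 24; 25];
      [:: 21; 22; 23; 25]; [:: 23; 24; 26; 27]; [:: 28; 29; 27; 25];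
      [:: 26; 30; 31; 25]; [:: 30; 31; 29; 26]; [:: 28; 30; 31; 26];
      [:: 28; 31; 29; 27]; [:: 28; 30; 29; 27]],
   [:: -97; -100; -100; -100; -88; -98; -77; -77; -70; -70; -53; -35; -35; -25; -25; -5;
      16; 16; 26; 26; 44; 62; 62; 70; 70; 83; 94; 94; 98; 98; 98; 98]);
  ([:: [:: 1; 2; 3; 4]; [:: 0; 2; 3; 5]; [:: 0; 1; 3; 5]; [:: 0; 1; 2; 4];
      [:: 0; 3; 5; 6]; [:: 4; 1; 2; 6]; [:: 4; 5; 7; 8]; [:: 8; 9; 10; 6];
      [:: 7; 9; 10; 6]; [:: 7; 8; 10; 11]; [:: 7; 8; 9; 11]; [:: 9; 10; 12; 13];
      [:: 13; 14; 15; 11]; [:: 12; 14; 15; 11]; [:: 12; 13; 15; 16];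
      [:: 12; 13; 14; 16]; [:: 14; 15; 17; 18]; [:: 18; 19; 20; 16];
      [:: 17; 19; 20; 16]; [:: 17; 18; 20; 21]; [:: 17; 18; 19; 21];
      [:: 19; 20; 22; 23]; [:: 23; 24; 25; 21]; [:: 22; 24; 25; 21];
      [:: 22; 23; 25; 26]; [:: 22; 23; 24; 26]; [:: 24; 25; 27; 28];
      [:: 29; 30; 28; 26]; [:: 27; 31; 32; 26]; [:: 31; 32; 30; 27];
      [:: 29; 31; 32; 27]; [:: 29; 32; 30; 28]; [:: 29; 31; 30; 28]],
   [:: 100; 100; 100; 100; 96; 96; 86; 73; 73; 66; 66; 48; 30; 30; 20; 20; 0; -20; -20;
      -30; -30; -48; -66; -66; -73; -73; -86; -96; -96; -100; -100; -100; -100]);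
  ([:: [:: 1; 2; 3; 4]; [:: 0; 2; 3; 5]; [:: 0; 1; 3; 5]; [:: 0; 1; 2; 4];
      [:: 0; 3; 5; 6]; [:: 4; 1; 2; 6]; [:: 4; 5; 7; 8]; [:: 8; 9; 10; 6];
      [:: 7; 9; 10; 6]; [:: 7; 8; 10; 11]; [:: 7; 8; 9; 11]; [:: 9; 10; 12; 13];
      [:: 13; 14; 15; 11]; [:: 12; 14; 15; 11]; [:: 12; 13; 15; 16];
      [:: 12; 13; 14; 16]; [:: 14; 15; 17; 18]; [:: 18; 19; 20; 16];
      [:: 17; 19; 20; 16]; [:: 17; 18; 20; 21]; [:: 17; 18; 19; 21];
      [:: 19; 20; 22; 23]; [:: 23; 24; 25; 21]; [:: 22; 24; 25; 21];
      [:: 22; 23; 25; 26]; [:: 22; 23; 24; 26]; [:: 24; 25; 27; 28];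
      [:: 29; 30; 28; 26]; [:: 31; 30; 27; 26]; [:: 32; 33; 31; 27];
      [:: 32; 33; 27; 28]; [:: 32; 33; 29; 28]; [:: 33; 31; 29; 30];
      [:: 32; 31; 29; 30]],
   [:: -99; -100; -100; -100; -97; -97; -86; -75; -75; -67; -67; -51; -33; -33; -24;
      -24; -4; 15; 15; 25; 25; 43; 60; 60; 68; 68; 81; 93; 93; 97; 96; 97; 98; 98]);
  ([:: [:: 1; 2; 3; 4]; [:: 0; 2; 3; 4]; [:: 0; 1; 3; 5]; [:: 0; 1; 2; 6];
      [:: 0; 1; 6; 5]; [:: 2; 4; 6; 7]; [:: 3; 4; 5; 7]; [:: 6; 5; 8; 9];
      [:: 9; 10; 11; 7]; [:: 8; 10; 11; 7]; [:: 8; 9; 11; 12]; [:: 8; 9; 10; 12];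
      [:: 10; 11; 13; 14]; [:: 14; 15; 16; 12]; [:: 13; 15; 16; 12];
      [:: 13; 14; 16; 17]; [:: 13; 14; 15; 17]; [:: 15; 16; 18; 19];
      [:: 19; 20; 21; 17]; [:: 18; 20; 21; 17]; [:: 18; 19; 21; 22];
      [:: 18; 19; 20; 22]; [:: 20; 21; 23; 24]; [:: 24; 25; 26; 22];
      [:: 23; 25; 26; 22]; [:: 23; 24; 26; 27]; [:: 23; 24; 25; 27];
      [:: 25; 26; 28; 29]; [:: 30; 31; 29; 27]; [:: 32; 31; 28; 27];
      [:: 33; 34; 32; 28]; [:: 33; 34; 28; 29]; [:: 33; 34; 30; 29];
      [:: 34; 32; 30; 31]; [:: 33; 32; 30; 31]],
   [:: 100; 100; 99; 99; 98; 95; 95; 83; 71; 71; 63; 63; 46; 29; 29; 19; 19; 0; -19;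
      -19; -29; -29; -46; -63; -63; -71; -71; -83; -95; -95; -99; -98; -99; -100; -100])].

Definition certificate n : (nat -> seq nat) * (nat -> Z) :=
  if (n < 36)%N then
    let: (tbl, xs) := nth ([::], [::]) small_certificates (n - 11) in (nth [::] tbl, nth 0 xs)
  else (mirror_nb n, mirror_x n).

Definition target_bound n : nat :=
  if (n <= 12)%N then 355 else if (n <= 17)%N then 268 else if (n <= 20)%N then 129
  else if (n <= 25)%N then 91 else 59.

Lemma certificates_ok :
  all (fun n => certifies n (certificate n).1 (certificate n).2 (target_bound n)) (iota 11 39).
Proof. by rewrite /certifies /laplacian_form /sqnorm unlock; vm_compute. Qed.

Lemma min_alg_conn_lt_target (R : rcfType) n (mu : R) : (11 <= n)%N ->
  is_min_alg_conn n mu ->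
  mu < (target_bound n)%:R / 1000%:R.
Proof.
move=> n_ge11 mu_min; case: (ltnP n 50) => [n_lt50|n_ge50].
  apply: certifies_min_alg_conn_lt mu_min _.
  by apply: (allP certificates_ok); rewrite mem_iota; lia.
have -> : target_bound n = 59%N by rewrite /target_bound; repeat case: ifP; lia.
exact: (mirror_min_alg_conn_lt n_ge50 mu_min).
Qed.

Theorem lemma3 (R : rcfType) (n : nat) (e : rel 'I_n) (mu : R) :
  (11 <= n)%N ->
  connected_quartic e ->
  alg_conn e mu ->
  (forall (e' : rel 'I_n) (mu' : R),
      connected_quartic e' -> alg_conn e' mu' -> mu <= mu') ->
  [/\ ((11 <= n)%N -> mu < 355%:R / 1000%:R),
      ((13 <= n)%N -> mu < 268%:R / 1000%:R),
      ((18 <= n)%N -> mu < 129%:R / 1000%:R),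
      ((21 <= n)%N -> mu < 91%:R / 1000%:R)
    & ((26 <= n)%N -> mu < 59%:R / 1000%:R)].
Proof.
move=> n_ge11 _ _ mu_min.
have mu_lt := min_alg_conn_lt_target n_ge11 mu_min.
have mu_lt_ge b : (target_bound n <= b)%N -> mu < b%:R / 1000%:R.
  move=> bound_le; apply: lt_le_trans mu_lt _.
  by rewrite ler_wpM2r ?invr_ge0 ?ler0n ?ler_nat.
by split=> n_ge; apply: mu_lt_ge; rewrite /target_bound; repeat case: ifP; lia.
Qed.
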